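(* Away from characteristic points of a regular surface $\Sigma\subset\mathbb{M}$, the mean curvature $\mathcal H_{\nabla^{1,\alpha},L}:=\mathrm{tr}\,II^{\nabla^{1,\alpha},L}$ satisfies $$\mathcal H_{\nabla^{1,\alpha},\infty}:=\lim_{L\to+\infty}\mathcal H_{\nabla^{1,\alpha},L}=X_1(\bar p)+X_2(\bar q)-(1-\alpha)\bar p.$$
   Context: The affine group $\mathbb{M}$ is modeled on $\{(x_1,x_2,x_3)\in\mathbb{R}^3: x_1>0\}$ with product $(m,n,s)\star(\lambda,\mu,\nu)=(m\lambda,m\mu+n,\nu+s)$. Put $X_1=x_1\partial_{x_1}$, $X_2=x_1\partial_{x_2}+\partial_{x_3}$, $X_3=x_1\partial_{x_2}$, with dual coframe $\omega_1=\frac1{x_1}dx_1$, $\omega_2=dx_3$, $\omega=\frac1{x_1}dx_2-dx_3$. For a constant $L>0$, $g_L=\omega_1\otimes\omega_1+\omega_2\otimes\omega_2+L\,\omega\otimes\omega$, so $X_1,X_2,\widetilde X_3:=L^{-1/2}X_3$ is $g_L$-orthonormal; $\langle\cdot,\cdot\rangle_L$ denotes $g_L$, and $\nabla$ is the Levi-Civita connection of $g_L$. Let $H_1=\mathrm{span}\{X_1,X_2\}$, and let $P^1$, $P^{1,\perp}$ be the $g_L$-orthogonal projections onto $H_1$ and onto $H_1^\perp=\mathrm{span}\{X_3\}$. For a real constant $\alpha$, the first kind of deformed Schouten–Van Kampen connection is $\nabla^{1,\alpha}_XY=(1-\alpha)\nabla_XY+\alpha P^1\nabla_X(P^1Y)+\alpha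 P^{1,\perp}\nabla_X(P^{1,\perp}Y)$. A regular surface is a Euclidean $C^2$-smooth compact oriented surface $\Sigma=\{u=0\}$ with $u$ Euclidean $C^2$ and with nonvanishing Euclidean gradient. $\nabla_Hu=X_1(u)X_1+X_2(u)X_2$; a point of $\Sigma$ is characteristic if $\nabla_Hu=0$. Put $p=X_1u$, $q=X_2u$, $r=\widetilde X_3u$, $l=\sqrt{p^2+q^2}$, $l_L=\sqrt{p^2+q^2+r^2}$, $\bar p=p/l$, $\bar q=q/l$, $\bar p_L=p/l_L$, $\bar q_L=q/l_L$, $\bar r_L=r/l_L$; $v_L=\bar p_LX_1+\bar q_LX_2+\bar r_L\widetilde X_3$, $e_1=\bar qX_1-\bar pX_2$, $e_2=\bar r_L\bar pX_1+\bar r_L\bar qX_2-\frac{l}{l_L}\widetilde X_3$. The second fundamental form is $II^{\nabla^{1,\alpha},L}=(\langle\nabla^{1,\alpha}_{e_i}v_L,e_j\rangle_L)_{i,j=1,2}$. *)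

From Stdlib Require Import Reals List.
From Coquelicot Require Import Coquelicot.
Open Scope R_scope.

(* Real functions on R^3 = coordinates (x1,x2,x3); the affine group M is the
   open half-space {x1 > 0}. *)
Definition fn3 := R -> R -> R -> R.
Definition inM (x1 x2 x3 : R) : Prop := 0 < x1.

Inductive idx := i1 | i2 | i3.
Definition sum3 (F : idx -> R) : R := F i1 + F i2 + F i3.

Definition d1 (f : fn3) : fn3 := fun x1 x2 x3 => Derive (fun t => f t x2 x3) x1.
Definition d2 (f : fn3) : fn3 := fun x1 x2 x3 => Derive (fun t => f x1 t x3) x2.
Definition d3 (f : fn3) : fn3 := fun x1 x2 x3 => Derive (fun t => f x1 x2 t) x3.
Definition dcoord (k : idx) (f : fn3) : fn3 :=
  match k with i1 => d1 f | i2 => d2 f | i3 => d3 f end.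

Definition X1 (f : fn3) : fn3 := fun x1 x2 x3 => x1 * d1 f x1 x2 x3.
Definition X2 (f : fn3) : fn3 := fun x1 x2 x3 => x1 * d2 f x1 x2 x3 + d3 f x1 x2 x3.
Definition X3 (f : fn3) : fn3 := fun x1 x2 x3 => x1 * d2 f x1 x2 x3.
Definition Xt3 (L : R) (f : fn3) : fn3 := fun x1 x2 x3 => / sqrt L * X3 f x1 x2 x3.

(* The g_L-orthonormal frame E_1 = X1, E_2 = X2, E_3 = X~3, as derivations. *)
Definition Edir (L : R) (i : idx) (f : fn3) : fn3 :=
  match i with i1 => X1 f | i2 => X2 f | i3 => Xt3 L f end.

(* Euclidean coordinate components of the frame fields
   (component m along d/dx_m). *)
Definition Ecoord (L : R) (i m : idx) : fn3 := fun x1 x2 x3 =>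
  match i, m with
  | i1, i1 => x1
  | i2, i2 => x1
  | i2, i3 => 1
  | i3, i2 => / sqrt L * x1
  | _, _ => 0
  end.

(* Coordinate components of the dual coframe omega_1, omega_2, sqrt(L) omega
   (dual to X1, X2, X~3):  omega_1 = dx1/x1, omega_2 = dx3,
   omega = dx2/x1 - dx3. *)
Definition theta (L : R) (k m : idx) : fn3 := fun x1 x2 x3 =>
  match k, m with
  | i1, i1 => / x1
  | i2, i3 => 1
  | i3, i2 => sqrt L / x1
  | i3, i3 => - sqrt L
  | _, _ => 0
  end.

(* Euclidean coordinate components of the Lie bracket [E_i, E_j]. *)
Definition brc (L : R) (i j m : idx) : fn3 := fun x1 x2 x3 =>
  sum3 (fun l => Ecoord L i l x1 x2 x3 * dcoord l (Ecoord L j m) x1 x2 x3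
               - Ecoord L j l x1 x2 x3 * dcoord l (Ecoord L i m) x1 x2 x3).

(* Structure functions: [E_i, E_j] = sum_k cst L i j k E_k. *)
Definition cst (L : R) (i j k : idx) : fn3 := fun x1 x2 x3 =>
  sum3 (fun m => theta L k m x1 x2 x3 * brc L i j m x1 x2 x3).

(* Levi-Civita connection of g_L on the orthonormal frame, by the Koszul
   formula: g_L(nabla_{E_i} E_j, E_k)
     = 1/2 ( g([E_i,E_j],E_k) - g([E_j,E_k],E_i) + g([E_k,E_i],E_j) ). *)
Definition Gamma (L : R) (i j k : idx) : fn3 := fun x1 x2 x3 =>
  / 2 * (cst L i j k x1 x2 x3 - cst L j k i x1 x2 x3 + cst L k i j x1 x2 x3).

(* A vector field, given by its components in the frame (X1, X2, X~3). *)
Definition vf := idx -> fn3.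

Definition LC (L : R) (X Y : vf) : vf := fun k x1 x2 x3 =>
  sum3 (fun i => X i x1 x2 x3 * Edir L i (Y k) x1 x2 x3)
  + sum3 (fun i => sum3 (fun j => X i x1 x2 x3 * Y j x1 x2 x3 * Gamma L i j k x1 x2 x3)).

Definition P1 (Y : vf) : vf := fun k =>
  match k with i3 => fun _ _ _ => 0 | _ => Y k end.
Definition P1perp (Y : vf) : vf := fun k =>
  match k with i3 => Y k | _ => fun _ _ _ => 0 end.

Definition nabla1 (L alpha : R) (X Y : vf) : vf := fun k x1 x2 x3 =>
  (1 - alpha) * LC L X Y k x1 x2 x3
  + alpha * P1 (LC L X (P1 Y)) k x1 x2 x3
  + alpha * P1perp (LC L X (P1perp Y)) k x1 x2 x3.

(* The metric g_L (the frame is g_L-orthonormal). *)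
Definition gL (X Y : vf) : fn3 := fun x1 x2 x3 =>
  sum3 (fun k => X k x1 x2 x3 * Y k x1 x2 x3).

Section Quantities.
Variables (L : R) (u : fn3).
Definition pp : fn3 := X1 u.
Definition qq : fn3 := X2 u.
Definition rr : fn3 := Xt3 L u.
Definition ll : fn3 := fun x1 x2 x3 => sqrt (pp x1 x2 x3 ^ 2 + qq x1 x2 x3 ^ 2).
Definition lL : fn3 := fun x1 x2 x3 =>
  sqrt (pp x1 x2 x3 ^ 2 + qq x1 x2 x3 ^ 2 + rr x1 x2 x3 ^ 2).
Definition pbar : fn3 := fun x1 x2 x3 => pp x1 x2 x3 / ll x1 x2 x3.
Definition qbar : fn3 := fun x1 x2 x3 => qq x1 x2 x3 / ll x1 x2 x3.
Definition pbarL : fn3 := fun x1 x2 x3 => pp x1 x2 x3 / lL x1 x2 x3.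
Definition qbarL : fn3 := fun x1 x2 x3 => qq x1 x2 x3 / lL x1 x2 x3.
Definition rbarL : fn3 := fun x1 x2 x3 => rr x1 x2 x3 / lL x1 x2 x3.
Definition vL : vf := fun k => match k with i1 => pbarL | i2 => qbarL | i3 => rbarL end.
Definition e1 : vf := fun k => match k with
  | i1 => qbar | i2 => fun x1 x2 x3 => - pbar x1 x2 x3 | i3 => fun _ _ _ => 0 end.
Definition e2 : vf := fun k => match k with
  | i1 => fun x1 x2 x3 => rbarL x1 x2 x3 * pbar x1 x2 x3
  | i2 => fun x1 x2 x3 => rbarL x1 x2 x3 * qbar x1 x2 x3
  | i3 => fun x1 x2 x3 => - (ll x1 x2 x3 / lL x1 x2 x3) end.
End Quantities.

Definition e_ (L : R) (u : fn3) (i : nat) : vf :=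
  match i with 1%nat => e1 u | _ => e2 L u end.

Definition II (L alpha : R) (u : fn3) (i j : nat) : fn3 :=
  gL (nabla1 L alpha (e_ L u i) (vL L u)) (e_ L u j).

Definition Hmean (L alpha : R) (u : fn3) : fn3 := fun x1 x2 x3 =>
  II L alpha u 1 1 x1 x2 x3 + II L alpha u 2 2 x1 x2 x3.

Definition cont3_at (f : fn3) (x1 x2 x3 : R) : Prop :=
  forall eps, 0 < eps -> exists delta, 0 < delta /\
    forall y1 y2 y3, Rabs (y1 - x1) < delta -> Rabs (y2 - x2) < delta ->
      Rabs (y3 - x3) < delta -> Rabs (f y1 y2 y3 - f x1 x2 x3) < eps.

Definition has_partials (f : fn3) (x1 x2 x3 : R) : Prop :=
  ex_derive (fun t => f t x2 x3) x1 /\ ex_derive (fun t => f x1 t x3) x2 /\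
  ex_derive (fun t => f x1 x2 t) x3.

Definition C2_on_M (u : fn3) : Prop :=
  forall x1 x2 x3, inM x1 x2 x3 ->
    cont3_at u x1 x2 x3 /\ has_partials u x1 x2 x3 /\
    (forall k, cont3_at (dcoord k u) x1 x2 x3 /\ has_partials (dcoord k u) x1 x2 x3) /\
    (forall k l, cont3_at (dcoord l (dcoord k u)) x1 x2 x3).

Definition open3 (O : R -> R -> R -> Prop) : Prop :=
  forall x1 x2 x3, O x1 x2 x3 -> exists delta, 0 < delta /\
    forall y1 y2 y3, Rabs (y1 - x1) < delta -> Rabs (y2 - x2) < delta ->
      Rabs (y3 - x3) < delta -> O y1 y2 y3.

Definition compact3 (S : R -> R -> R -> Prop) : Prop :=
  forall (I : Type) (O : I -> R -> R -> R -> Prop),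
    (forall i, open3 (O i)) ->
    (forall x1 x2 x3, S x1 x2 x3 -> exists i, O i x1 x2 x3) ->
    exists l : list I, forall x1 x2 x3, S x1 x2 x3 ->
      exists i, In i l /\ O i x1 x2 x3.

Definition Sigma (u : fn3) (x1 x2 x3 : R) : Prop := inM x1 x2 x3 /\ u x1 x2 x3 = 0.

(* Sigma = {u = 0} is a regular surface: u Euclidean C^2, nonvanishing
   Euclidean gradient on Sigma, Sigma compact (orientation is induced by u). *)
Definition regular_surface (u : fn3) : Prop :=
  C2_on_M u /\
  (forall x1 x2 x3, Sigma u x1 x2 x3 ->
     ~ (d1 u x1 x2 x3 = 0 /\ d2 u x1 x2 x3 = 0 /\ d3 u x1 x2 x3 = 0)) /\
  compact3 (Sigma u).

Definition characteristic (u : fn3) (x1 x2 x3 : R) : Prop :=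
  X1 u x1 x2 x3 = 0 /\ X2 u x1 x2 x3 = 0.

From Pilot Require Import Defs.
From Stdlib Require Import Reals Lra.
From Coquelicot Require Import Coquelicot.
Open Scope R_scope.

(* 1. In the g_L-orthonormal frame (X1, X2, X~3) the Levi-Civita Christoffel
      symbols are constants depending only on sqrt L (Gamma_christoffel).
   2. Hence, at a point of M, H_{nabla^{1,alpha},L} is an explicit algebraic
      expression in x1, p = X1 u, q = X2 u, s = X3 u, k = L^(-1/2) and the
      partial derivatives of the components of v_L (Hmean_expr).
   3. Each component of v_L, and each of pbar, qbar, has the form
      N / sqrt (p^2 + q^2 + (k s)^2); the quotient rule expresses its partial
      derivatives through those of p, q, s (dcoord_normalized).
   4. So H_{nabla^{1,alpha},L} = F(L^(-1/2)) for a function F which, away from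
      characteristic points (p^2 + q^2 > 0), is continuous at 0, with F(0)
      equal to X1(pbar) + X2(qbar) - (1 - alpha) pbar.  Since L^(-1/2) -> 0,
      the theorem follows by composition of limits. *)

Definition christoffel (c : R) (i j k : idx) : R :=
  match i, j, k with
  | i1, i2, i3 => c / 2 | i1, i3, i2 => - (c / 2)
  | i2, i1, i3 => - (c / 2) | i2, i3, i1 => c / 2
  | i3, i1, i2 => - (c / 2) | i3, i2, i1 => c / 2
  | i3, i1, i3 => -1 | i3, i3, i1 => 1
  | _, _, _ => 0 end.
(* Derivatives of the identity and of a linear function of one variable
   (the frame coefficients are linear in x1). *)
Lemma Derive_identity (x : R) : Derive (fun t => t) x = 1.
Proof. exact (Derive_id x). Qed.

Lemma Derive_linear (a x : R) : Derive (fun t => a * t) x = a.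
Proof. rewrite Derive_scal, Derive_identity. ring. Qed.

(* The structure functions of the frame are constant, so the Koszul formula
   yields constant Christoffel symbols on M. *)
Lemma Gamma_christoffel L i j k x1 x2 x3 : 0 < L -> x1 <> 0 ->
  Gamma L i j k x1 x2 x3 = christoffel (sqrt L) i j k.
Proof.
intros HL Hx. assert (Hs : sqrt L <> 0) by (apply Rgt_not_eq, sqrt_lt_R0; lra).
destruct i, j, k;
  unfold Gamma, cst, brc, sum3, theta, Ecoord, dcoord, Defs.d1, Defs.d2, Defs.d3;
  cbv beta iota; rewrite ?Derive_const, ?Derive_identity, ?Derive_linear;
  unfold christoffel; field; auto.
Qed.

Section MeanCurvatureExpression.
Variables (x1 alpha p q s : R) (dP dQ dR : idx -> R) (k : R).
(* p, q, s are X1 u, X2 u, X3 u at the point, k = L^(-1/2), and dP, dQ, dR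
   are the Euclidean gradients of the components of v_L. *)

Definition hlen := sqrt (p ^ 2 + q ^ 2).
Definition flen := sqrt (p ^ 2 + q ^ 2 + (k * s) ^ 2).
Definition pb := p / hlen.
Definition qb := q / hlen.
Definition pbL := p / flen.
Definition rbL := k * s / flen.

Definition e2a := rbL * pb.
Definition e2b := rbL * qb.
Definition e2d := - (hlen / flen).

Definition actX1 (D : idx -> R) := x1 * D i1.
Definition actX2 (D : idx -> R) := x1 * D i2 + D i3.
Definition actX3 (D : idx -> R) := k * (x1 * D i2).
Definition acte1 D := qb * actX1 D - pb * actX2 D.
Definition acte2 D := e2a * actX1 D + e2b * actX2 D + e2d * actX3 D.

(* Trace of the second fundamental form: the derivative part
   <e1(v_L), e1> + <e2(v_L), e2> plus the single surviving Christoffel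
   contribution, weighted by (1 - alpha). *)
Definition mean_curvature_expr :=
  qb * acte1 dP - pb * acte1 dQ + e2a * acte2 dP + e2b * acte2 dQ + e2d * acte2 dR
  + (1 - alpha) * (e2a * e2d * rbL - e2d * e2d * pbL).
End MeanCurvatureExpression.

Lemma Hmean_expr L alpha u x1 x2 x3 :
  0 < L -> x1 <> 0 -> ll u x1 x2 x3 <> 0 -> lL L u x1 x2 x3 <> 0 ->
  Hmean L alpha u x1 x2 x3 =
  mean_curvature_expr x1 alpha (X1 u x1 x2 x3) (X2 u x1 x2 x3) (X3 u x1 x2 x3)
    (fun j => dcoord j (pbarL L u) x1 x2 x3) (fun j => dcoord j (qbarL L u) x1 x2 x3)
    (fun j => dcoord j (rbarL L u) x1 x2 x3) (/ sqrt L).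
Proof.
intros HL Hx Hl HlL.
assert (Hs : sqrt L <> 0) by (apply Rgt_not_eq, sqrt_lt_R0; lra).
unfold Hmean, II, gL, nabla1, LC, P1, P1perp, e_, e1, e2, vL, sum3; cbv beta iota.
rewrite !Gamma_christoffel by auto.
unfold christoffel, Edir, mean_curvature_expr, acte1, acte2, actX1, actX2, actX3, e2a, e2b, e2d,
  pb, qb, pbL, rbL, flen, hlen.
cbv beta iota delta [dcoord].
unfold pbar, qbar, pbarL, qbarL, rbarL, ll, lL, pp, qq, rr, Xt3, X1, X2, X3 in *.
field. auto.
Qed.

(* Quotient-rule derivative of t |-> n(t) / sqrt (f(t)^2 + g(t)^2 + (k h(t))^2),
   in terms of the values and derivatives of n, f, g, h. *)
Definition quot_deriv (n dn p q s dp dq ds k : R) : R :=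
  (dn * sqrt (p ^ 2 + q ^ 2 + (k * s) ^ 2)
   - n * ((2 * p * dp + 2 * q * dq + 2 * (k * s) * (k * ds))
          / (2 * sqrt (p ^ 2 + q ^ 2 + (k * s) ^ 2))))
  / sqrt (p ^ 2 + q ^ 2 + (k * s) ^ 2) ^ 2.

Lemma is_derive_normalized (n f g h : R -> R) (k t0 dn df dg dh : R) :
  is_derive n t0 dn -> is_derive f t0 df -> is_derive g t0 dg -> is_derive h t0 dh ->
  0 < f t0 ^ 2 + g t0 ^ 2 + (k * h t0) ^ 2 ->
  is_derive (fun t => n t / sqrt (f t ^ 2 + g t ^ 2 + (k * h t) ^ 2)) t0
    (quot_deriv (n t0) dn (f t0) (g t0) (h t0) df dg dh k).
Proof.
intros Hn Hf Hg Hh Hpos.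
assert (Hsq : f t0 * (f t0 * 1) + g t0 * (g t0 * 1) + k * h t0 * (k * h t0 * 1)
              = f t0 ^ 2 + g t0 ^ 2 + (k * h t0) ^ 2) by ring.
assert (Hs : sqrt (f t0 ^ 2 + g t0 ^ 2 + (k * h t0) ^ 2) <> 0)
  by (apply Rgt_not_eq, sqrt_lt_R0; lra).
auto_derive; rewrite ?Hsq.
- repeat split; try (eexists; eassumption); auto.
- replace (Derive (fun x => n x) t0) with dn by (symmetry; now apply is_derive_unique).
  replace (Derive (fun x => f x) t0) with df by (symmetry; now apply is_derive_unique).
  replace (Derive (fun x => g x) t0) with dg by (symmetry; now apply is_derive_unique).
  replace (Derive (fun x => h x) t0) with dh by (symmetry; now apply is_derive_unique).
  unfold quot_deriv. field. exact Hs.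
Qed.

Definition line (j : idx) (f : fn3) (x1 x2 x3 : R) : R -> R :=
  match j with
  | i1 => fun t => f t x2 x3 | i2 => fun t => f x1 t x3 | i3 => fun t => f x1 x2 t end.
Definition pt (j : idx) (x1 x2 x3 : R) : R :=
  match j with i1 => x1 | i2 => x2 | i3 => x3 end.

Lemma dcoord_line j f x1 x2 x3 :
  dcoord j f x1 x2 x3 = Derive (line j f x1 x2 x3) (pt j x1 x2 x3).
Proof. now destruct j. Qed.

Lemma line_pt j f x1 x2 x3 : line j f x1 x2 x3 (pt j x1 x2 x3) = f x1 x2 x3.
Proof. now destruct j. Qed.

Lemma dcoord_ext j (f g : fn3) x1 x2 x3 :
  (forall y1 y2 y3, f y1 y2 y3 = g y1 y2 y3) -> dcoord j f x1 x2 x3 = dcoord j g x1 x2 x3.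
Proof.
intros Hfg. rewrite !dcoord_line. apply Derive_ext. intros t. destruct j; apply Hfg.
Qed.

Section NormalizedComponents.
Variables (u : fn3) (x1 x2 x3 : R) (j : idx).
Let p := X1 u x1 x2 x3.
Let q := X2 u x1 x2 x3.
Let s := X3 u x1 x2 x3.
Let t0 := pt j x1 x2 x3.
Let dp := Derive (line j (X1 u) x1 x2 x3) t0.
Let dq := Derive (line j (X2 u) x1 x2 x3) t0.
Let ds := Derive (line j (X3 u) x1 x2 x3) t0.
Hypotheses (Ep : ex_derive (line j (X1 u) x1 x2 x3) t0)
  (Eq : ex_derive (line j (X2 u) x1 x2 x3) t0)
  (Es : ex_derive (line j (X3 u) x1 x2 x3) t0).

(* Partial derivative of N / sqrt (p^2 + q^2 + (k s)^2), the common shape of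
   the components of v_L (k = L^(-1/2)) and of pbar, qbar (k = 0). *)
Lemma dcoord_normalized (N : fn3) (k : R) :
  ex_derive (line j N x1 x2 x3) t0 -> 0 < p ^ 2 + q ^ 2 + (k * s) ^ 2 ->
  dcoord j (fun y1 y2 y3 => N y1 y2 y3
    / sqrt (X1 u y1 y2 y3 ^ 2 + X2 u y1 y2 y3 ^ 2 + (k * X3 u y1 y2 y3) ^ 2)) x1 x2 x3
  = quot_deriv (N x1 x2 x3) (Derive (line j N x1 x2 x3) t0) p q s dp dq ds k.
Proof.
intros EN Hpos. rewrite dcoord_line. apply is_derive_unique.
pose proof (is_derive_normalized _ _ _ _ k t0 _ _ _ _ (Derive_correct _ _ EN)
  (Derive_correct _ _ Ep) (Derive_correct _ _ Eq) (Derive_correct _ _ Es)) as H.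
unfold t0 in H. rewrite !line_pt in H.
eapply is_derive_ext; [| exact (H Hpos)]. intros t. now destruct j.
Qed.

Lemma dcoord_pbarL L : 0 < p ^ 2 + q ^ 2 + (/ sqrt L * s) ^ 2 ->
  dcoord j (pbarL L u) x1 x2 x3 = quot_deriv p dp p q s dp dq ds (/ sqrt L).
Proof. exact (dcoord_normalized (X1 u) (/ sqrt L) Ep). Qed.

Lemma dcoord_qbarL L : 0 < p ^ 2 + q ^ 2 + (/ sqrt L * s) ^ 2 ->
  dcoord j (qbarL L u) x1 x2 x3 = quot_deriv q dq p q s dp dq ds (/ sqrt L).
Proof. exact (dcoord_normalized (X2 u) (/ sqrt L) Eq). Qed.

Lemma dcoord_rbarL L : 0 < p ^ 2 + q ^ 2 + (/ sqrt L * s) ^ 2 ->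
  dcoord j (rbarL L u) x1 x2 x3
  = quot_deriv (/ sqrt L * s) (/ sqrt L * ds) p q s dp dq ds (/ sqrt L).
Proof.
assert (Hline : forall t, line j (Xt3 L u) x1 x2 x3 t = / sqrt L * line j (X3 u) x1 x2 x3 t)
  by (intros t; now destruct j).
intros Hpos. unfold ds. rewrite <- Derive_scal, <- (Derive_ext _ _ _ Hline).
apply (dcoord_normalized (Xt3 L u) (/ sqrt L)); auto.
apply (ex_derive_ext _ _ _ (fun t => eq_sym (Hline t))). now apply ex_derive_scal.
Qed.

Lemma dcoord_horizontal (N : fn3) :
  ex_derive (line j N x1 x2 x3) t0 -> 0 < p ^ 2 + q ^ 2 ->
  dcoord j (fun y1 y2 y3 => N y1 y2 y3 / sqrt (X1 u y1 y2 y3 ^ 2 + X2 u y1 y2 y3 ^ 2)) x1 x2 x3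
  = quot_deriv (N x1 x2 x3) (Derive (line j N x1 x2 x3) t0) p q s dp dq ds 0.
Proof.
intros EN Hpos. rewrite <- dcoord_normalized; auto.
- apply dcoord_ext. intros y1 y2 y3. do 2 f_equal. ring.
- replace ((0 * s) ^ 2) with 0 by ring. now rewrite Rplus_0_r.
Qed.
End NormalizedComponents.

(* The mean curvature as a function of k = L^(-1/2), once the partial
   derivatives of the components of v_L are expanded by the quotient rule;
   dp, dq, ds are the Euclidean gradients of X1 u, X2 u, X3 u. *)
Definition curvature_profile (x1 alpha p q s : R) (dp dq ds : idx -> R) (k : R) : R :=
  mean_curvature_expr x1 alpha p q s
    (fun j => quot_deriv p (dp j) p q s (dp j) (dq j) (ds j) k)
    (fun j => quot_deriv q (dq j) p q s (dp j) (dq j) (ds j) k)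
    (fun j => quot_deriv (k * s) (k * ds j) p q s (dp j) (dq j) (ds j) k) k.

(* Away from characteristic points (p^2 + q^2 > 0) the profile is smooth,
   hence continuous, at k = 0 ... *)
Lemma curvature_profile_continuous x1 alpha p q s dp dq ds : 0 < p ^ 2 + q ^ 2 ->
  continuous (curvature_profile x1 alpha p q s dp dq ds) 0.
Proof.
intros Hpq. apply (ex_derive_continuous (K := R_AbsRing) (V := R_NormedModule)).
unfold curvature_profile, mean_curvature_expr, acte1, acte2, actX1, actX2, actX3,
  e2a, e2b, e2d, pb, qb, pbL, rbL, flen, hlen, quot_deriv.
assert (Hl : 0 < sqrt (p ^ 2 + q ^ 2)) by (apply sqrt_lt_R0; lra).
auto_derive.
replace (p * (p * 1) + q * (q * 1) + 0 * s * (0 * s * 1)) with (p ^ 2 + q ^ 2) by ring.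
replace (p * (p * 1) + q * (q * 1)) with (p ^ 2 + q ^ 2) by ring.
repeat split; nra.
Qed.

(* ... and its value there is the claimed sub-Riemannian limit: only the
   derivative of the horizontal normal and the Christoffel term survive. *)
Lemma curvature_profile_at_0 x1 alpha p q s dp dq ds : 0 < p ^ 2 + q ^ 2 ->
  curvature_profile x1 alpha p q s dp dq ds 0 =
  x1 * quot_deriv p (dp i1) p q s (dp i1) (dq i1) (ds i1) 0
  + (x1 * quot_deriv q (dq i2) p q s (dp i2) (dq i2) (ds i2) 0
     + quot_deriv q (dq i3) p q s (dp i3) (dq i3) (ds i3) 0)
  - (1 - alpha) * (p / sqrt (p ^ 2 + q ^ 2)).
Proof.
intros Hpq.
unfold curvature_profile, mean_curvature_expr, acte1, acte2, actX1, actX2, actX3,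
  e2a, e2b, e2d, pb, qb, pbL, rbL, flen, hlen, quot_deriv.
replace (p ^ 2 + q ^ 2 + (0 * s) ^ 2) with (p ^ 2 + q ^ 2) by ring.
assert (Hl : 0 < sqrt (p ^ 2 + q ^ 2)) by (apply sqrt_lt_R0; lra).
assert (Hl2 : sqrt (p ^ 2 + q ^ 2) ^ 2 = p ^ 2 + q ^ 2)
  by (rewrite <- Rsqr_pow2; apply Rsqr_sqrt; lra).
revert Hl Hl2. generalize (sqrt (p ^ 2 + q ^ 2)). intros l Hl Hl2.
field_simplify_eq; [| lra].
replace (l ^ 6) with (l ^ 4 * l ^ 2) by ring. rewrite Hl2. ring.
Qed.

Definition frame_lines_derivable (u : fn3) (x1 x2 x3 : R) : Prop :=
  forall j, ex_derive (line j (X1 u) x1 x2 x3) (pt j x1 x2 x3) /\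
    ex_derive (line j (X2 u) x1 x2 x3) (pt j x1 x2 x3) /\
    ex_derive (line j (X3 u) x1 x2 x3) (pt j x1 x2 x3).

Lemma frame_lines_derivable_of_partials u x1 x2 x3 :
  (forall k, has_partials (dcoord k u) x1 x2 x3) -> frame_lines_derivable u x1 x2 x3.
Proof.
intros Hd j.
destruct (Hd i1) as [A1 [A2 A3]], (Hd i2) as [B1 [B2 B3]], (Hd i3) as [C1 [C2 C3]].
simpl in *.
destruct j; simpl; unfold X1, X2, X3; repeat split; auto_derive; repeat split; auto.
Qed.

Definition point_profile (alpha : R) (u : fn3) (x1 x2 x3 : R) : R -> R :=
  curvature_profile x1 alpha (X1 u x1 x2 x3) (X2 u x1 x2 x3) (X3 u x1 x2 x3)
    (fun j => Derive (line j (X1 u) x1 x2 x3) (pt j x1 x2 x3))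
    (fun j => Derive (line j (X2 u) x1 x2 x3) (pt j x1 x2 x3))
    (fun j => Derive (line j (X3 u) x1 x2 x3) (pt j x1 x2 x3)).

Section AtNoncharacteristicPoint.
Variables (alpha : R) (u : fn3) (x1 x2 x3 : R).
Hypotheses (Hx : 0 < x1) (Hlines : frame_lines_derivable u x1 x2 x3)
  (Hpq : 0 < X1 u x1 x2 x3 ^ 2 + X2 u x1 x2 x3 ^ 2).

Lemma Hmean_profile L :
  0 < L -> Hmean L alpha u x1 x2 x3 = point_profile alpha u x1 x2 x3 (/ sqrt L).
Proof.
intros HL.
assert (HpL : 0 < X1 u x1 x2 x3 ^ 2 + X2 u x1 x2 x3 ^ 2 + (/ sqrt L * X3 u x1 x2 x3) ^ 2)
  by nra.
rewrite Hmean_expr; try lra.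
- unfold point_profile, curvature_profile, mean_curvature_expr,
    acte1, acte2, actX1, actX2, actX3.
  destruct (Hlines i1) as [Ep1 [Eq1 Es1]], (Hlines i2) as [Ep2 [Eq2 Es2]],
    (Hlines i3) as [Ep3 [Eq3 Es3]].
  rewrite !dcoord_pbarL, !dcoord_qbarL, !dcoord_rbarL by assumption.
  reflexivity.
- apply Rgt_not_eq, sqrt_lt_R0. exact Hpq.
- apply Rgt_not_eq, sqrt_lt_R0. exact HpL.
Qed.

Lemma limit_value_profile :
  X1 (pbar u) x1 x2 x3 + X2 (qbar u) x1 x2 x3 - (1 - alpha) * pbar u x1 x2 x3
  = point_profile alpha u x1 x2 x3 0.
Proof.
unfold point_profile. rewrite curvature_profile_at_0 by exact Hpq.
destruct (Hlines i1) as [Ep1 [Eq1 Es1]], (Hlines i2) as [Ep2 [Eq2 Es2]],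
  (Hlines i3) as [Ep3 [Eq3 Es3]].
change (X1 (pbar u) x1 x2 x3) with (x1 * dcoord i1 (pbar u) x1 x2 x3).
change (X2 (qbar u) x1 x2 x3)
  with (x1 * dcoord i2 (qbar u) x1 x2 x3 + dcoord i3 (qbar u) x1 x2 x3).
unfold pbar, qbar, ll, pp, qq.
rewrite !dcoord_horizontal by assumption.
reflexivity.
Qed.
End AtNoncharacteristicPoint.

Lemma lim_inv_sqrt : is_lim (fun L => / sqrt L) p_infty 0.
Proof.
apply (is_lim_inv (fun L => sqrt L) p_infty p_infty); [| discriminate].
apply is_lim_sqrt_p, is_lim_id.
Qed.

Theorem proposition2p16 (alpha : R) (u : fn3) (x1 x2 x3 : R) :
  regular_surface u ->
  Sigma u x1 x2 x3 ->
  ~ characteristic u x1 x2 x3 ->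
  is_lim (fun L => Hmean L alpha u x1 x2 x3) p_infty
    (X1 (pbar u) x1 x2 x3 + X2 (qbar u) x1 x2 x3 - (1 - alpha) * pbar u x1 x2 x3).
Proof.
intros [HC2 _] [Hx _] Hnc.
destruct (HC2 x1 x2 x3 Hx) as [_ [_ [Hdu _]]].
assert (Hlines : frame_lines_derivable u x1 x2 x3)
  by (apply frame_lines_derivable_of_partials; intros k; apply Hdu).
assert (Hpq : 0 < X1 u x1 x2 x3 ^ 2 + X2 u x1 x2 x3 ^ 2).
{ unfold characteristic in Hnc.
  destruct (Req_dec (X1 u x1 x2 x3) 0), (Req_dec (X2 u x1 x2 x3) 0); try tauto; nra. }
rewrite (limit_value_profile alpha u x1 x2 x3 Hlines Hpq).
apply is_lim_ext_loc with (f := fun L => point_profile alpha u x1 x2 x3 (/ sqrt L)).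
- exists 0. intros L HL. symmetry. exact (Hmean_profile alpha u x1 x2 x3 Hx Hlines Hpq L HL).
- eapply filterlim_comp; [exact lim_inv_sqrt | now apply curvature_profile_continuous].
Qed.
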